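(* Let $G$ be a finite graph, let $(C,D)$ be an ordered partition of $V(G)$, let $c_0\in C$ and $d_0\in D$, and let $(V_1,\dots,V_k)$ be a $D$-twin partition of $C$. Then \[\mathrm{dist}_G(c_0,d_0)=\min_{i\in[k]}\bigl(\mathrm{dist}_G(c_0,V_i)+\mathrm{dist}_{G[V_i\cup D]}(V_i,d_0)\bigr).\]
   Context: An ordered partition of a set is a finite sequence of pairwise disjoint (possibly empty) subsets whose union is the set. For a partition $\{C,D\}$ of $V(G)$, a $D$-twin partition of $C$ is a partition $(V_1,\dots,V_k)$ of $C$ (parts may be empty) such that for each $i$ and all $u,v\in V_i$, $N_G(u)\cap D=N_G(v)\cap D$. $\mathrm{dist}_G$ is shortest-path distance ($\infty$ if no path); for sets, $\mathrm{dist}_G(U,x)=\min_{u\in U}\mathrm{dist}_G(u,x)$ with $\min\emptyset=\infty$. $G[W]$ denotes the induced subgraph. *)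

(* Finite simple graph = symmetric irreflexive relation on a finType. *)
From mathcomp Require Import all_boot.
From Stdlib Require Import ClassicalEpsilon.
Set Implicit Arguments. Unset Strict Implicit. Unset Printing Implicit Defensive.

Section Dist.
Variables (T : finType) (e : rel T).

(* a walk of length n from u to v all of whose vertices lie in W
   (i.e. a walk in the induced subgraph G[W]) *)
Definition walkb (W : {set T}) (u v : T) (n : nat) : bool :=
  [exists p : n.-tuple T,
     [&& u \in W, all (fun x => x \in W) p, path e u p & last u p == v]].

(* extended naturals: None = infinity *)
Definition omin (a b : option nat) : option nat :=
  match a, b with
  | None, _ => b
  | _, None => a
  | Some x, Some y => Some (minn x y)
  end.

Definition oadd (a b : option nat) : option nat :=
  match a, b with
  | Some x, Some y => Some (x + y)
  | _, _ => None
  end.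

Definition dist (W : {set T}) (u v : T) : option nat :=
  match excluded_middle_informative (exists n, walkb W u v n) with
  | left H => Some (ex_minn H)
  | right _ => None
  end.

(* dist_{G[W]}(U, x) = min_{u in U} dist_{G[W]}(u, x), min over empty = infinity *)
Definition dist_set (W U : {set T}) (x : T) : option nat :=
  \big[omin/None]_(u in U) dist W u x.

Definition nbhd (u : T) : {set T} := [set w | e u w].

End Dist.

(* A shortest c0-d0 path leaves C for the last time at some z, which lies in a
   part V_i; its tail from z runs inside G[V_i ∪ D].  Conversely, a walk inside
   G[V_i ∪ D] from V_i to d0 enters D through an edge y w with y in V_i; since
   all of V_i has the same neighbours in D, the edge y w can be replaced by u w
   for the vertex u of V_i closest to c0. *)
From mathcomp Require Import all_boot.
From Stdlib Require Import ClassicalEpsilon.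
Set Implicit Arguments. Unset Strict Implicit. Unset Printing Implicit Defensive.

(* [oleq a n] is [a <= n] with [None] read as infinity; equalities of extended
   naturals are checked through it (oleq_inj), which turns [omin] and [oadd]
   into existentials over walks. *)
Definition oleq (a : option nat) (n : nat) : bool :=
  if a is Some x then x <= n else false.

Lemma oleq_inj a b : (forall n, oleq a n = oleq b n) -> a = b.
Proof.
case: a => [x|]; case: b => [y|] //= eq_ab.
- have := eq_ab x; have := eq_ab y; rewrite !leqnn => xy yx.
  by congr Some; apply/eqP; rewrite eqn_leq xy -yx.
- by have := eq_ab x; rewrite leqnn.
- by have := eq_ab y; rewrite leqnn.
Qed.

Lemma oleq_omin a b n : oleq (omin a b) n = oleq a n || oleq b n.
Proof. by case: a => [x|]; case: b => [y|] //=; rewrite ?orbF // geq_min. Qed.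

Lemma oleq_big_omin (I : finType) (P : pred I) (F : I -> option nat) n :
  oleq (\big[omin/None]_(i | P i) F i) n = [exists (i | P i), oleq (F i) n].
Proof.
rewrite (big_morph (oleq^~ n) (id1 := false) (op1 := orb)) ?big_orE //.
by move=> a b; rewrite oleq_omin.
Qed.

Lemma oleq_oaddP a b n :
  reflect (exists x y, [/\ oleq a x, oleq b y & x + y <= n])
          (oleq (oadd a b) n).
Proof.
apply: (iffP idP); case: a => [x|]; case: b => [y|] //=.
- by move=> xy_n; exists x, y.
- by case=> [x' [y' [xx' yy' xy_n]]]; exact/(leq_trans _ xy_n)/leq_add.
- by case=> [? [? []]].
- by case=> [? [? []]].
- by case=> [? [? []]].
Qed.

Section Walks.
Variables (T : finType) (e : rel T).
Implicit Types (W D U : {set T}) (u v w x y z : T).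

Lemma walkbP W u v n :
  reflect (exists p : seq T, [/\ size p = n, u \in W, all (mem W) p,
              path e u p & last u p = v]) (walkb e W u v n).
Proof.
apply: (iffP existsP).
- case=> p /and4P [uW pW up /eqP pv]; exists (val p).
  by split => //; exact: size_tuple.
- case=> p [np uW pW up pv]; exists (tcast np (in_tuple p)).
  by rewrite val_tcast /= uW pW up pv eqxx.
Qed.

Lemma walkb0 W x : x \in W -> walkb e W x x 0.
Proof. by move=> xW; apply/walkbP; exists [::]. Qed.

Lemma walkb_edge W u v : u \in W -> v \in W -> e u v -> walkb e W u v 1.
Proof. by move=> uW vW uv; apply/walkbP; exists [:: v]; rewrite /= vW uv. Qed.

Lemma walkb_memr W u v n : walkb e W u v n -> v \in W.
Proof.
case/walkbP=> p [_ uW pW _ <-].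
by have /predU1P[->|/(allP pW)] // := mem_last u p.
Qed.

Lemma walkb_cat W u v w a b :
  walkb e W u v a -> walkb e W v w b -> walkb e W u w (a + b).
Proof.
case/walkbP=> [p [<- uW pW up <-]] /walkbP [q [<- _ qW vq <-]].
apply/walkbP; exists (p ++ q).
by rewrite size_cat all_cat pW qW cat_path up vq last_cat.
Qed.

Lemma walkb_sub W W' u v n :
  W \subset W' -> walkb e W u v n -> walkb e W' u v n.
Proof.
move=> /subsetP sWW' /walkbP [p [np uW pW up pv]]; apply/walkbP; exists p.
by split => //; [exact: sWW' | exact: sub_all pW].
Qed.

Lemma walkb_rev W u v n : symmetric e -> walkb e W u v n -> walkb e W v u n.
Proof.
move=> e_sym uv; have vW := walkb_memr uv; move: uv vW.
case/walkbP=> p [<- uW pW up <-] vW; apply/walkbP.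
exists (rev (belast u p)); split => //.
- by rewrite size_rev size_belast.
- by rewrite all_rev; apply/allP => t /mem_belast /predU1P [-> | /(allP pW)].
- by rewrite rev_path (eq_path (e' := e)) // => x y; exact: e_sym.
- by case: p {up pW vW} => [|x p] //=; rewrite rev_cons last_rcons.
Qed.

Lemma path_last_exit D x p : x \notin D -> path e x p ->
  exists z a b, [/\ z \notin D, walkb e [set: T] x z a,
    walkb e (z |: D) z (last x p) b & a + b = size p].
Proof.
move=> xD; elim/last_ind: p => [|p y IH].
  move=> _; exists x, 0, 0.
  by split => //=; apply: walkb0; rewrite ?in_setT ?setU11.
rewrite rcons_path last_rcons size_rcons => /andP [xp py].
have [yD | yD] := boolP (y \in D); last first.
  exists y, (size p).+1, 0; rewrite addn0; split => //.
    apply/walkbP; exists (rcons p y).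
    rewrite size_rcons rcons_path xp py last_rcons in_setT.
    by split => //; apply/allP => t _; rewrite inE.
  exact: walkb0 (setU11 _ _).
have [z [a [b [zD xz zp ab]]]] := IH xp.
exists z, a, b.+1; split => //; last by rewrite addnS ab.
rewrite -addn1; apply: (walkb_cat zp); apply: walkb_edge py.
  exact: walkb_memr zp.
by rewrite !inE yD orbT.
Qed.

Lemma path_first_entry W D u q : u \in W -> u \notin D ->
  all (mem W) q -> path e u q -> last u q \in D ->
  exists y w m, [/\ y \in W, y \notin D, e y w, w \in D &
    walkb e W w (last u q) m /\ m < size q].
Proof.
elim: q u => [|x q IH] u uW uD //=; first by rewrite (negbTE uD).
case/andP=> xW qW /andP [ux xq] qD.
have [xD | xD] := boolP (x \in D).
  exists u, x, (size q); split => //; split => //.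
  by apply/walkbP; exists q.
have [y [w [m [yW yD yw wD [wq mq]]]]] := IH x xW xD qW xq qD.
by exists y, w, m; split => //; split => //; exact: ltnW.
Qed.

Lemma oleq_distP W u v n :
  reflect (exists2 m, m <= n & walkb e W u v m) (oleq (dist e W u v) n).
Proof.
rewrite /dist; case: excluded_middle_informative => [ex_walk | no_walk] /=.
- case: ex_minnP => m uv_m m_min; apply: (iffP idP) => [mn | [m' m'n uv_m']].
    by exists m.
  exact: leq_trans (m_min _ uv_m') m'n.
- by apply: (iffP idP) => // -[m _ uv_m]; case: no_walk; exists m.
Qed.

Lemma oleq_dist_setP W U x n :
  reflect (exists2 u, u \in U & exists2 m, m <= n & walkb e W u x m)
    (oleq (dist_set e W U x) n).
Proof.
rewrite /dist_set oleq_big_omin; apply: (iffP existsP).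
- by case=> u /andP [uU /oleq_distP]; exists u.
- by case=> u uU /oleq_distP uxn; exists u; rewrite uU.
Qed.

End Walks.

Section TwinRoutes.
Variables (T : finType) (e : rel T) (D : {set T}).
Hypothesis e_sym : symmetric e.
Implicit Types (U : {set T}) (c d : T) (n : nat).

Definition dist_via (U : {set T}) (c d : T) : option nat :=
  oadd (dist_set e [set: T] U c) (dist_set e (U :|: D) U d).

Lemma dist_le_dist_via U c d n :
  [disjoint U & D] -> {in U &, forall u v, nbhd e u :&: D = nbhd e v :&: D} ->
  d \in D -> oleq (dist_via U c d) n -> oleq (dist e [set: T] c d) n.
Proof.
move=> UD U_twin dD /oleq_oaddP [a [b []]].
case/oleq_dist_setP=> u uU [a' a'a uc].
case/oleq_dist_setP=> v vU [b' b'b /walkbP [q [qb vW qW vq qd]]] abn.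
have qD : last v q \in D by rewrite qd.
have [y [w [m [yW yD yw wD [wd mq]]]]] :=
  path_first_entry vW (negbT (disjointFr UD vU)) qW vq qD.
have yU : y \in U by move: yW; rewrite inE (negbTE yD) orbF.
have uw : e u w.
  have : w \in nbhd e y :&: D by rewrite !inE yw wD.
  by rewrite (U_twin y u yU uU) !inE => /andP [].
apply/oleq_distP; exists (a' + (1 + m)).
  apply: leq_trans abn; apply: leq_add => //.
  by rewrite add1n; apply: leq_trans b'b; rewrite -qb.
apply: (walkb_cat (walkb_rev e_sym uc)).
apply: (walkb_cat (walkb_edge _ _ uw)); rewrite ?in_setT //.
by rewrite -qd; apply: walkb_sub wd; exact: subsetT.
Qed.

Lemma dist_via_part_le_dist k (V : 'I_k -> {set T}) c d n :
  (forall z, z \notin D -> exists i, z \in V i) -> c \notin D ->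
  oleq (dist e [set: T] c d) n -> [exists i, oleq (dist_via (V i) c d) n].
Proof.
move=> V_cover cD /oleq_distP [m mn /walkbP [p [pm _ _ cp pd]]].
have [z [a [b [zD cz zd ab]]]] := path_last_exit cD cp.
rewrite pd in zd; have [i zV] := V_cover z zD.
apply/existsP; exists i; apply/oleq_oaddP; exists a, b.
split; last by rewrite ab pm.
- by apply/oleq_dist_setP; exists z => //; exists a => //; exact: walkb_rev.
- apply/oleq_dist_setP; exists z => //; exists b => //.
  by apply: walkb_sub zd; apply: setSU; rewrite sub1set.
Qed.

End TwinRoutes.

Theorem lemma6p1 (T : finType) (e : rel T)
  (e_sym : symmetric e) (e_irr : irreflexive e)
  (C D : {set T})
  (CD_disj : C :&: D = set0) (CD_cover : C :|: D = [set: T])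
  (c0 d0 : T) (c0C : c0 \in C) (d0D : d0 \in D)
  (k : nat) (V : 'I_k -> {set T})
  (V_disj : forall i j, i != j -> [disjoint V i & V j])
  (V_cover : \bigcup_(i < k) V i = C)
  (V_twin : forall i, forall u v, u \in V i -> v \in V i ->
       nbhd e u :&: D = nbhd e v :&: D) :
  dist e [set: T] c0 d0 =
  \big[omin/None]_(i < k)
     oadd (dist_set e [set: T] (V i) c0) (dist_set e (V i :|: D) (V i) d0).
Proof.
have CD : [disjoint C & D] by rewrite -setI_eq0 CD_disj.
have V_sub_C i : V i \subset C by rewrite -V_cover (bigcup_sup i).
apply: oleq_inj => n; rewrite oleq_big_omin; apply/idP/idP.
- apply: (dist_via_part_le_dist e_sym) => [z zD|].
    have : z \in \bigcup_(i < k) V i.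
      by have := in_setT z; rewrite -CD_cover V_cover inE (negbTE zD) orbF.
    by case/bigcupP=> i _; exists i.
  exact: negbT (disjointFr CD c0C).
- case/existsP=> i /= via_i; apply: (dist_le_dist_via e_sym) via_i => //.
  + exact: disjointWl (V_sub_C i) CD.
  + exact: V_twin.
Qed.
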